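(* Let $p$ be a prime number and $d$ a positive integer, and let $i\ge1$ be such that $P_0^{i-1}\le d\le P_0^i$. Then $\tau_p(d)=i+1$ if $d=P_j^i$ for some $j\le i$, and $\tau_p(d)=i$ otherwise. Equivalently, $\tau_p(d)=\lceil\log_p((p-1)d+1)\rceil$ if $d$ is a sum of consecutive powers of $p$, and $\tau_p(d)=\lceil\log_p((p-1)d+1)\rceil-1$ otherwise.
   Context: For non-negative integers $j\le i$, $P_j^i=p^j+p^{j+1}+\dots+p^i=\frac{p^{i+1}-p^j}{p-1}$. A sum of consecutive powers of $p$ means an integer of the form $P_j^i$. For a positive integer $d$, $\tau_p(d)$ is the maximum of $s+\min\{v_p(d_1),\dots,v_p(d_s)\}$ over all partitions $d=d_1+\dots+d_s$ into positive integers with $d_{i+1}\le p^{-1}d_i$ for $i=1,\dots,s-1$, where $v_p$ is the $p$-adic valuation. *)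

From mathcomp Require Import all_boot.
Set Implicit Arguments. Unset Strict Implicit. Unset Printing Implicit Defensive.

Definition Psum (p j i : nat) : nat := \sum_(j <= k < i.+1) p ^ k.

Definition consec_pow_sum (p d : nat) : Prop :=
  exists j i, j <= i /\ d = Psum p j i.

(* an admissible partition d = d_1 + ... + d_s (s >= 1) into positive
   integers with d_{k+1} <= d_k / p, i.e. p * d_{k+1} <= d_k *)
Definition adm_partition (p d : nat) (ds : seq nat) : Prop :=
  [/\ ds != [::], all (fun x => 0 < x) ds, sumn ds = d
    & sorted (fun a b => p * b <= a) ds].

Definition part_value (p : nat) (ds : seq nat) : nat :=
  size ds + \big[minn/logn p (head 0 ds)]_(x <- ds) logn p x.

Definition tau_is (p d v : nat) : Prop :=
  (exists ds, adm_partition p d ds /\ part_value p ds = v) /\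
  (forall ds, adm_partition p d ds -> part_value p ds <= v).

From mathcomp Require Import all_boot zify.

(* In an admissible partition of d with s parts of minimal p-adic valuation m,
   every part is divisible by p^m and at least p times the next one, so the
   parts, read from the smallest, are at least p^m, p^(m+1), ..., p^(m+s-1)
   and d >= P_m^(m+s-1).  Since d <= P_0^i < p^(i+1), the value s + m is at
   most i+1; when it equals i+1 we get P_m^i <= d <= P_0^i with p^m | d, which
   forces d = P_m^i because P_0^i - P_m^i < p^m.  The bounds are attained by
   p^i + ... + p^j when d = P_j^i, and otherwise by
   (d - P_0^(i-2)) + p^(i-2) + ... + 1.  The up_log form follows from
   (p-1) P_0^i + 1 = p^(i+1). *)

Set Implicit Arguments.
Unset Strict Implicit.
Unset Printing Implicit Defensive.

Lemma Psum_recr p j i : j <= i.+1 -> Psum p j i.+1 = Psum p j i + p ^ i.+1.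
Proof. by move=> ji; rewrite /Psum big_nat_recr. Qed.

Lemma Psum_diag p j : Psum p j j = p ^ j.
Proof. by rewrite /Psum big_nat1. Qed.

Lemma Psum_ge p j i : j <= i -> p ^ i <= Psum p j i.
Proof. by move=> ji; rewrite /Psum big_nat_recr //= leq_addl. Qed.

Lemma Psum_le_Psum0 p j i : j <= i -> Psum p j i <= Psum p 0 i.
Proof.
by move=> ji; rewrite /Psum [X in _ <= X](@big_cat_nat _ _ _ j) ?leqW // leq_addl.
Qed.

Lemma dvdn_Psum p j i : p ^ j %| Psum p j i.
Proof. by rewrite /Psum big_nat; apply: dvdn_sum => k /andP[jk _]; apply: dvdn_exp2l. Qed.

Lemma Psum_geom p j i : 0 < p -> j <= i -> (p - 1) * Psum p j i + p ^ j = p ^ i.+1.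
Proof.
move=> p_gt0 /subnKC <-; elim: (i - j) => [|n IHn].
  by rewrite addn0 Psum_diag expnS; nia.
by rewrite addnS Psum_recr ?leqW ?leq_addr // [p ^ _.+2]expnS; nia.
Qed.

Lemma Psum0_lt_expn p i : 1 < p -> Psum p 0 i < p ^ i.+1.
Proof.
move=> p_gt1; have := Psum_geom (ltnW p_gt1) (leq0n i); rewrite expn0.
have : Psum p 0 i <= (p - 1) * Psum p 0 i by rewrite leq_pmull ?subn_gt0.
lia.
Qed.

Lemma Psum0_lt_Psum_add p m i : 1 < p -> m <= i -> Psum p 0 i < Psum p m i + p ^ m.
Proof.
move=> p_gt1 mi; have := Psum_geom (ltnW p_gt1) mi; have := Psum_geom (ltnW p_gt1) (leq0n i).
rewrite expn0; have : 0 < p ^ m by rewrite expn_gt0 ltnW.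
have : 0 < p - 1 by rewrite subn_gt0.
move: (p - 1) (p ^ m) (Psum p 0 i) (Psum p m i) => q a P0 Pm; nia.
Qed.

Lemma Psum_squeeze p m i d : 1 < p -> m <= i -> p ^ m %| d ->
  Psum p m i <= d <= Psum p 0 i -> d = Psum p m i.
Proof.
move=> p_gt1 mi dvd_d /andP[lo hi].
have dvd_diff : p ^ m %| d - Psum p m i by rewrite dvdn_sub ?dvdn_Psum.
have := Psum0_lt_Psum_add p_gt1 mi.
case: (posnP (d - Psum p m i)) => [|diff_gt0]; first by lia.
have := dvdn_leq diff_gt0 dvd_diff; lia.
Qed.

Lemma bigmin_le (f : nat -> nat) a s y : y \in s -> \big[minn/a]_(x <- s) f x <= f y.
Proof.
elim: s => [|z s IHs] //; rewrite in_cons big_cons => /predU1P[-> | /IHs].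
  exact: geq_minl.
exact: leq_trans (geq_minr _ _).
Qed.

Lemma bigmin_ge (f : nat -> nat) a s c :
  c <= a -> {in s, forall x, c <= f x} -> c <= \big[minn/a]_(x <- s) f x.
Proof.
move=> ca cf; rewrite big_seq; elim/big_ind: _ => // u v cu cv.
by rewrite leq_min cu.
Qed.

Lemma path_Psum_le p m x r : path (fun a b => p * b <= a) x r ->
  all (leq (p ^ m)) (x :: r) ->
  p ^ (m + size r) <= x /\ Psum p m (m + size r) <= sumn (x :: r).
Proof.
elim: r x => [|y r IHr] x /=.
  by rewrite addn0 Psum_diag addn0 andbT => _ ->.
move=> /andP[yx path_r] /and3P[mx my mr].
have [ry rsum] := IHr y path_r (introT andP (conj my mr)).
have rx : p ^ (m + size r).+1 <= x.
  by apply: leq_trans yx; rewrite expnS leq_mul2l ry orbT.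
rewrite addnS Psum_recr ?leqW ?leq_addr //; split=> //.
by rewrite addnC leq_add.
Qed.

Lemma sorted_Psum_le p m s : s != [::] -> sorted (fun a b => p * b <= a) s ->
  all (leq (p ^ m)) s -> Psum p m (m + (size s).-1) <= sumn s.
Proof. by case: s => // x r _ path_r /(path_Psum_le path_r)[]. Qed.

Fixpoint desc_powers (p j n : nat) : seq nat :=
  if n is n'.+1 then p ^ (j + n') :: desc_powers p j n' else [::].

Lemma size_desc_powers p j n : size (desc_powers p j n) = n.
Proof. by elim: n => //= n ->. Qed.

Lemma sumn_desc_powers p j n : sumn (desc_powers p j n) = \sum_(j <= k < j + n) p ^ k.
Proof.
elim: n => [|n IHn] /=; first by rewrite addn0 big_geq.
by rewrite IHn addnS big_nat_recr ?leq_addr // addnC.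
Qed.

Lemma Psum_desc_powers p j i : j <= i -> Psum p j i = sumn (desc_powers p j (i - j).+1).
Proof. by move=> ji; rewrite sumn_desc_powers addnS subnKC. Qed.

Lemma desc_powers_path p j n x : p ^ (j + n) <= x ->
  path (fun a b => p * b <= a) x (desc_powers p j n).
Proof.
elim: n x => [|n IHn] x //= nx.
by rewrite -expnS -addnS nx /=; apply: IHn.
Qed.

Lemma desc_powers_sorted p j n : sorted (fun a b => p * b <= a) (desc_powers p j n).
Proof. by case: n => //= n; apply: desc_powers_path. Qed.

Lemma desc_powers_gt0 p j n : 0 < p -> all (fun x => 0 < x) (desc_powers p j n).
Proof. by move=> p_gt0; elim: n => //= n ->; rewrite expn_gt0 p_gt0. Qed.

Lemma logn_desc_powers p j n x : prime p -> x \in desc_powers p j n -> j <= logn p x.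
Proof.
move=> p_prime; elim: n => //= n IHn; rewrite in_cons => /predU1P[-> | /IHn //].
by rewrite pfactorK ?leq_addr.
Qed.

Lemma adm_partition_desc_powers p j i : prime p -> j <= i ->
  adm_partition p (Psum p j i) (desc_powers p j (i - j).+1).
Proof.
move=> p_prime ji; split=> //; last exact: desc_powers_sorted.
  by rewrite desc_powers_gt0 ?prime_gt0.
by rewrite Psum_desc_powers.
Qed.

Lemma part_value_desc_powers p j n : prime p ->
  j + n.+1 <= part_value p (desc_powers p j n.+1).
Proof.
move=> p_prime; rewrite /part_value size_desc_powers addnC leq_add2l.
apply: bigmin_ge => [|x]; last exact: logn_desc_powers.
by rewrite /= pfactorK ?leq_addr.
Qed.

Section AdmissiblePartition.

Variables (p d : nat) (ds : seq nat).
Hypotheses (p_prime : prime p) (ds_adm : adm_partition p d ds).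

Let minval := \big[minn/logn p (head 0 ds)]_(x <- ds) logn p x.

Lemma minval_dvd_part x : x \in ds -> p ^ minval %| x.
Proof.
move=> xds; apply: dvdn_trans (pfactor_dvdnn p x).
by rewrite dvdn_exp2l ?bigmin_le.
Qed.

Lemma minval_dvd_sum : p ^ minval %| d.
Proof.
case: ds_adm => _ _ <- _.
by rewrite sumnE big_seq; apply: dvdn_sum => x /minval_dvd_part.
Qed.

Lemma part_value_pred : (part_value p ds).-1 = minval + (size ds).-1.
Proof.
have : 0 < size ds by case: ds_adm; rewrite lt0n size_eq0.
by rewrite /part_value -/minval; lia.
Qed.

Lemma Psum_minval_le : Psum p minval (part_value p ds).-1 <= d.
Proof.
case: ds_adm => ds_nil /allP ds_gt0 <- sorted_ds.
rewrite part_value_pred; apply: sorted_Psum_le => //; apply/allP => x xds.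
exact: dvdn_leq (ds_gt0 x xds) (minval_dvd_part xds).
Qed.

Lemma part_value_gt0 : 0 < part_value p ds.
Proof. by case: ds_adm; rewrite /part_value -size_eq0 -lt0n => /ltn_addr. Qed.

Lemma part_value_le i : d <= Psum p 0 i -> part_value p ds <= i.+1.
Proof.
have p_gt1 := prime_gt1 p_prime.
move=> d_le; rewrite -(prednK part_value_gt0) -(ltn_exp2l _ _ p_gt1).
apply: leq_ltn_trans (Psum0_lt_expn i p_gt1).
apply: leq_trans d_le; apply: leq_trans Psum_minval_le.
by apply: Psum_ge; rewrite part_value_pred leq_addr.
Qed.

Lemma part_value_Psum i : d <= Psum p 0 i -> part_value p ds = i.+1 ->
  exists j, j <= i /\ d = Psum p j i.
Proof.
move=> d_le v_eq; have p_gt1 := prime_gt1 p_prime.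
have minval_le : minval <= i.
  by rewrite -[i]/(i.+1.-1) -v_eq part_value_pred leq_addr.
exists minval; split=> //; apply: Psum_squeeze => //; first exact: minval_dvd_sum.
by rewrite d_le andbT -[i]/(i.+1.-1) -v_eq Psum_minval_le.
Qed.

End AdmissiblePartition.

Lemma tau_isP p d v :
  (exists2 ds, adm_partition p d ds & v <= part_value p ds) ->
  (forall ds, adm_partition p d ds -> part_value p ds <= v) -> tau_is p d v.
Proof.
move=> [ds ds_adm v_le] v_ge; split=> //.
by exists ds; split=> //; apply/eqP; rewrite eqn_leq v_le v_ge.
Qed.

Lemma tau_is_Psum p j i : prime p -> j <= i -> tau_is p (Psum p j i) i.+1.
Proof.
move=> p_prime ji; apply: tau_isP => [|ds ds_adm]; last first.
  by apply: (part_value_le p_prime ds_adm); apply: Psum_le_Psum0.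
exists (desc_powers p j (i - j).+1); first exact: adm_partition_desc_powers.
by have := part_value_desc_powers j (i - j) p_prime; rewrite addnS subnKC.
Qed.

Lemma tau_is_not_Psum p d i : prime p -> 0 < i -> Psum p 0 i.-1 <= d <= Psum p 0 i ->
  ~ (exists j, j <= i /\ d = Psum p j i) -> tau_is p d i.
Proof.
move=> p_prime i_gt0 /andP[d_ge d_le] not_Psum.
apply: tau_isP => [|ds ds_adm].
  set ds0 := desc_powers p 0 i.-1.
  have Psum_split : Psum p 0 i.-1 = p ^ i.-1 + sumn ds0.
    by rewrite Psum_desc_powers // subn0.
  exists ((d - sumn ds0) :: ds0); last by rewrite /part_value /= size_desc_powers; lia.
  have pow_gt0 : 0 < p ^ i.-1 by rewrite expn_gt0 prime_gt0.
  split=> //=.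
  - by rewrite (desc_powers_gt0 _ _ (prime_gt0 p_prime)) andbT; lia.
  - by lia.
  - by apply: desc_powers_path; rewrite add0n; lia.
have v_neq : part_value p ds <> i.+1 by move/(part_value_Psum p_prime ds_adm d_le).
by have := part_value_le p_prime ds_adm d_le; lia.
Qed.

Lemma up_log_Psum0 p d i : 1 < p -> 0 < d ->
  up_log p ((p - 1) * d + 1) = i.+1 <-> p ^ i <= (p - 1) * d /\ d <= Psum p 0 i.
Proof.
move=> p_gt1 d_gt0; have geom := Psum_geom (ltnW p_gt1) (leq0n i).
rewrite expn0 in geom; have q_gt0 : 0 < p - 1 by rewrite subn_gt0.
have qd_gt0 : 0 < (p - 1) * d by rewrite muln_gt0 q_gt0.
split=> [up_eq | [lo hi]]; last first.
  by apply: up_log_eq => //; rewrite -geom leq_add2r leq_pmul2l // hi andbT; lia.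
have /andP[lo hi] : p ^ i < (p - 1) * d + 1 <= p ^ i.+1.
  by rewrite -[in p ^ i]/(i.+1.-1) -up_eq; apply: up_log_bounds => //; lia.
by split; [lia | rewrite -(leq_pmul2l q_gt0) -(leq_add2r 1) geom].
Qed.

Lemma tau_is_consec p d : prime p -> consec_pow_sum p d ->
  tau_is p d (up_log p ((p - 1) * d + 1)).
Proof.
move=> p_prime [j [i [ji ->]]]; have p_gt1 := prime_gt1 p_prime.
have pow_le := Psum_ge p ji.
suff -> : up_log p ((p - 1) * Psum p j i + 1) = i.+1 by exact: tau_is_Psum.
have Psum_gt0 : 0 < Psum p j i by apply: leq_trans pow_le; rewrite expn_gt0 ltnW.
apply/(up_log_Psum0 _ p_gt1 Psum_gt0); split; last exact: Psum_le_Psum0.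
by rewrite (leq_trans pow_le) // leq_pmull ?subn_gt0.
Qed.

Lemma tau_is_not_consec p d : prime p -> 0 < d -> ~ consec_pow_sum p d ->
  tau_is p d (up_log p ((p - 1) * d + 1)).-1.
Proof.
move=> p_prime d_gt0 not_consec; have p_gt1 := prime_gt1 p_prime.
have q_gt0 : 0 < p - 1 by rewrite subn_gt0.
have [i up_eq] : exists i, up_log p ((p - 1) * d + 1) = i.+1.
  exists (up_log p ((p - 1) * d + 1)).-1; rewrite prednK // up_log_gt0 p_gt1.
  by rewrite addn1 ltnS muln_gt0 q_gt0.
have [lo hi] := iffLR (up_log_Psum0 _ p_gt1 d_gt0) up_eq; rewrite up_eq /=.
have i_gt0 : 0 < i.
  rewrite lt0n; apply/eqP => i0; apply: not_consec; exists 0, 0.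
  by move: hi; rewrite i0 !Psum_diag expn0; lia.
apply: tau_is_not_Psum => //; last by move=> [j [ji d_eq]]; apply: not_consec; exists j, i.
have geom := Psum_geom (ltnW p_gt1) (leq0n i.-1); rewrite prednK // expn0 in geom.
by rewrite hi andbT -(leq_pmul2l q_gt0); lia.
Qed.

Theorem proposition2p20 (p d : nat) :
  prime p -> 0 < d ->
  (forall i, 1 <= i -> Psum p 0 i.-1 <= d <= Psum p 0 i ->
     ((exists j, j <= i /\ d = Psum p j i) -> tau_is p d i.+1) /\
     (~ (exists j, j <= i /\ d = Psum p j i) -> tau_is p d i)) /\
  (consec_pow_sum p d -> tau_is p d (up_log p ((p - 1) * d + 1))) /\
  (~ consec_pow_sum p d -> tau_is p d (up_log p ((p - 1) * d + 1)).-1).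
Proof.
move=> p_prime d_gt0; split; last first.
  by split; [exact: tau_is_consec | exact: tau_is_not_consec].
move=> i i_gt0 d_bounds; split=> [[j [ji ->]] | not_Psum]; first exact: tau_is_Psum.
exact: tau_is_not_Psum.
Qed.
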